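(* Fix a nonempty directed edge set $\mathcal{E}$ and a randomized design with $0<\mathbb{E}[z_i]<1$ for all $i$. Then there is no choice of deterministic weights ${\bf w},{\bf v}$ such that the individually weighted linear estimator $\sum_i(w_iz_i+v_i(1-z_i))Y_i({\bf z})$ has expectation equal to $\mathrm{AIE}$ for every choice of real parameters $\alpha,\beta,\{\gamma_{ki}\}_{(k,i)\in\mathcal{E}}$ of the heterogeneous additive network effects model.
   Context: Population $[n]$; random treatment vector ${\bf z}\in\{0,1\}^n$ drawn from a randomized design. Heterogeneous additive network effects model: $Y_i({\bf z})=\alpha_i+\beta_iz_i+\sum_{k\in[n]}\gamma_{ki}z_k$ with deterministic real parameters, $\gamma_{ki}=0$ unless $(k,i)\in\mathcal{E}$, where $\mathcal{E}$ is a set of ordered pairs $(k,i)$, $k\neq i$. Average interference effect: $\mathrm{AIE}=\frac1n\sum_i(Y_i({\bf e}_{[n]\setminus\{i\}})-Y_i({\bf 0}))=\frac1n\sum_{(k,i)\in\mathcal{E}}\gamma_{ki}$, where ${\bf e}_S$ is the indicator vector of $S\subseteq[n]$. *)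

From HB Require Import structures.
From mathcomp Require Import all_boot all_order all_algebra.
Set Implicit Arguments. Unset Strict Implicit. Unset Printing Implicit Defensive.
Import Order.TTheory GRing.Theory Num.Theory.
Local Open Scope ring_scope.

(* treatment vectors z in {0,1}^n, z i = true means unit i is treated *)
Notation treat n := {ffun 'I_n -> bool}.

Definition is_design (R : numDomainType) n (p : treat n -> R) : Prop :=
  (forall z, 0 <= p z) /\ \sum_(z : treat n) p z = 1.

Definition expect (R : numDomainType) n (p : treat n -> R) (f : treat n -> R) : R :=
  \sum_(z : treat n) p z * f z.

Definition zr (R : numDomainType) n (z : treat n) (i : 'I_n) : R := (z i)%:R.

Definition Yout (R : numDomainType) n (alpha beta : 'I_n -> R)
  (gamma : 'I_n -> 'I_n -> R) (z : treat n) (i : 'I_n) : R :=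
  alpha i + beta i * zr R z i + \sum_(k : 'I_n) gamma k i * zr R z k.

Definition AIE (R : numFieldType) n (E : {set 'I_n * 'I_n})
  (gamma : 'I_n -> 'I_n -> R) : R :=
  n%:R^-1 * \sum_(e in E) gamma e.1 e.2.

Definition iwl_est (R : numDomainType) n (w v : 'I_n -> R) (alpha beta : 'I_n -> R)
  (gamma : 'I_n -> 'I_n -> R) (z : treat n) : R :=
  \sum_(i : 'I_n) (w i * zr R z i + v i * (1 - zr R z i)) * Yout alpha beta gamma z i.

From HB Require Import structures.
From mathcomp Require Import all_boot all_order all_algebra.
From mathcomp Require Import ring.
Set Implicit Arguments. Unset Strict Implicit. Unset Printing Implicit Defensive.
Import Order.TTheory GRing.Theory Num.Theory.
Local Open Scope ring_scope.

(* Testing unbiasedness on a model in which only unit i has a nonzero baseline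
   [alpha] forces [w_i P(z_i = 1) + v_i P(z_i = 0) = 0]; testing it on a model in
   which only unit i has a nonzero direct effect [beta] forces [w_i P(z_i = 1) = 0].
   As both probabilities are positive, all weights vanish, so the estimator is
   identically zero, while the AIE of the model with a single interference
   coefficient on an edge of E is [1/n <> 0]. *)

Section IndividuallyWeightedEstimator.

Variables (R : numDomainType) (n : nat).
Implicit Types (w v alpha beta : 'I_n -> R) (gamma : 'I_n -> 'I_n -> R)
  (z : treat n) (p : treat n -> R).

Definition unit_weight w v z i := w i * zr R z i + v i * (1 - zr R z i).

Definition indicator (i : 'I_n) : 'I_n -> R := fun j => (j == i)%:R.

Lemma iwl_est_supported_at w v alpha beta gamma (i : 'I_n) z :
  (forall j, j != i -> alpha j = 0) -> (forall j, j != i -> beta j = 0) ->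
  (forall k j, j != i -> gamma k j = 0) ->
  iwl_est w v alpha beta gamma z = unit_weight w v z i * Yout alpha beta gamma z i.
Proof.
move=> alpha0 beta0 gamma0; rewrite /iwl_est (bigD1 i) //= big1 ?addr0 // => j ji.
rewrite /Yout alpha0 // beta0 // big1 ?mul0r ?add0r ?mulr0 // => k _.
by rewrite gamma0 // mul0r.
Qed.

Lemma iwl_est_weights0 w v alpha beta gamma z :
  (forall i, w i = 0) -> (forall i, v i = 0) -> iwl_est w v alpha beta gamma z = 0.
Proof.
by move=> w0 v0; rewrite /iwl_est big1 // => i _; rewrite w0 v0 !mul0r addr0 mul0r.
Qed.

Lemma Yout_indicator_alpha (i : 'I_n) z :
  Yout (indicator i) (fun _ => 0) (fun _ _ => 0) z i = 1.
Proof.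
by rewrite /Yout /indicator eqxx mul0r addr0 big1 ?addr0 // => k _; rewrite mul0r.
Qed.

Lemma Yout_indicator_beta (i : 'I_n) z :
  Yout (fun _ => 0) (indicator i) (fun _ _ => 0) z i = zr R z i.
Proof.
by rewrite /Yout /indicator eqxx mul1r add0r big1 ?addr0 // => k _; rewrite mul0r.
Qed.

Lemma expect_unit_weight p w v (i : 'I_n) :
  \sum_(z : treat n) p z = 1 ->
  expect p (unit_weight w v ^~ i) =
  w i * expect p (fun z => zr R z i) + v i * (1 - expect p (fun z => zr R z i)).
Proof.
move=> p1; rewrite /expect -{1}p1 !mulr_sumr -sumrB mulr_sumr -big_split /=.
by apply: eq_bigr => z _; rewrite /unit_weight; ring.
Qed.

(* On a treated unit the control weight drops out, since [z_i (1 - z_i) = 0]. *)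
Lemma expect_unit_weight_treated p w v (i : 'I_n) :
  expect p (fun z => unit_weight w v z i * zr R z i) =
  w i * expect p (fun z => zr R z i).
Proof.
rewrite /expect mulr_sumr; apply: eq_bigr => z _.
by rewrite /unit_weight /zr; case: (z i) => /=; ring.
Qed.

End IndividuallyWeightedEstimator.

Section Unbiasedness.

Variables (R : realFieldType) (n : nat) (E : {set 'I_n * 'I_n}).
Implicit Types (w v : 'I_n -> R) (gamma : 'I_n -> 'I_n -> R) (p : treat n -> R).

Definition supported_on gamma := forall k i, (k, i) \notin E -> gamma k i = 0.

Definition iwl_unbiased p w v := forall alpha beta gamma, supported_on gamma ->
  expect p (iwl_est w v alpha beta gamma) = AIE E gamma.

Lemma AIE0 : AIE E (fun _ _ => 0 : R) = 0.
Proof. by rewrite /AIE big1 ?mulr0. Qed.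

Lemma iwl_unbiased_weights0 p w v (i : 'I_n) :
  \sum_(z : treat n) p z = 1 -> 0 < expect p (fun z => zr R z i) < 1 ->
  iwl_unbiased p w v -> w i = 0 /\ v i = 0.
Proof.
move=> p1 /andP[pi_gt0 pi_lt1] unbiased.
have gamma0 : supported_on (fun _ _ => 0) by [].
have at_i (alpha beta : 'I_n -> R) :
    (forall j, j != i -> alpha j = 0) -> (forall j, j != i -> beta j = 0) ->
    expect p (fun z => unit_weight w v z i * Yout alpha beta (fun _ _ => 0) z i) = 0.
  move=> alpha0 beta0.
  transitivity (expect p (iwl_est w v alpha beta (fun _ _ => 0))).
    by apply: eq_bigr => z _; rewrite (iwl_est_supported_at w v z alpha0 beta0).
  by rewrite unbiased // AIE0.
have indicator0 j : j != i -> indicator R i j = 0 by rewrite /indicator => /negbTE ->.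
have baseline : expect p (fun z => unit_weight w v z i) = 0.
  rewrite -(at_i (indicator R i) (fun _ => 0) indicator0 (fun _ _ => erefl)).
  by apply: eq_bigr => z _; rewrite Yout_indicator_alpha mulr1.
have direct : expect p (fun z => unit_weight w v z i * zr R z i) = 0.
  rewrite -(at_i (fun _ => 0) (indicator R i) (fun _ _ => erefl) indicator0).
  by apply: eq_bigr => z _; rewrite Yout_indicator_beta.
rewrite expect_unit_weight_treated in direct.
rewrite expect_unit_weight // in baseline.
have wi : w i = 0.
  by apply/eqP; move/eqP: direct; rewrite mulf_eq0 (gt_eqF pi_gt0) orbF.
split=> //; apply/eqP; move/eqP: baseline.
by rewrite wi mul0r add0r mulf_eq0 subr_eq0 (gt_eqF pi_lt1) orbF.
Qed.

Lemma AIE_edge_indicator (k i : 'I_n) : (k, i) \in E ->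
  AIE E (fun k' i' => ((k', i') == (k, i))%:R : R) = n%:R^-1.
Proof.
move=> kiE; rewrite /AIE (bigD1 (k, i)) //= eqxx big1 ?addr0 ?mulr1 //.
by move=> e /andP[_ /negbTE]; rewrite -surjective_pairing => ->.
Qed.

Lemma AIE_nonzero_model : E != set0 ->
  exists2 gamma, supported_on gamma & AIE E gamma != 0.
Proof.
case/set0Pn=> -[k i] kiE.
exists (fun k' i' => ((k', i') == (k, i))%:R : R).
  by move=> k' i'; case: eqP => // -[-> ->]; rewrite kiE.
rewrite AIE_edge_indicator // invr_eq0 pnatr_eq0 -lt0n.
exact: leq_ltn_trans (leq0n _) (ltn_ord k).
Qed.

End Unbiasedness.

Theorem theorem5 (R : realFieldType) (n : nat) (E : {set 'I_n * 'I_n})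
  (p : treat n -> R) :
  (forall e, e \in E -> e.1 != e.2) ->
  E != set0 ->
  is_design p ->
  (forall i : 'I_n, 0 < expect p (fun z => zr R z i) < 1) ->
  ~ (exists w v : 'I_n -> R,
       forall (alpha beta : 'I_n -> R) (gamma : 'I_n -> 'I_n -> R),
         (forall k i, (k, i) \notin E -> gamma k i = 0) ->
         expect p (iwl_est w v alpha beta gamma) = AIE E gamma).
Proof.
move=> _ /(AIE_nonzero_model R)[gamma gammaE AIE_neq0] [_ p1] pi_bounds.
case=> w [v unbiased].
have weights0 i := iwl_unbiased_weights0 p1 (pi_bounds i) unbiased.
have w0 i : w i = 0 by case: (weights0 i).
have v0 i : v i = 0 by case: (weights0 i).
move: AIE_neq0; rewrite -(unbiased (fun _ => 0) (fun _ => 0) gamma gammaE).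
by rewrite /expect big1 ?eqxx // => z _; rewrite iwl_est_weights0 ?mulr0.
Qed.
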